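(* Let $C$ be a nonzero $[n,k]_q$-linear code. If there exists a codeword $\mathbf{c}\in C$ such that $w_1(\mathbf{c})=d_1(C)$ and $\chi_1(\mathbf{c})$ is a successive subset of $\mathbb{Z}_n$, then $d_b(C)=\min\{d_1(C)+b-1,\,n\}$ for every $1\le b\le n$.
   Context: Index set: $\mathbb{Z}_n=\{1,2,\dots,n\}$ with indices taken cyclically modulo $n$ (so $n\equiv 0$ and $n+1\equiv 1$). For $\mathbf{x}=(x_1,\dots,x_n)\in\mathbb{F}_q^n$ and $1\le b\le n$, the $b$-symbol support is $\chi_b(\mathbf{x})=\{i\in\mathbb{Z}_n : (x_i,x_{i+1},\dots,x_{i+b-1})\ne \mathbf{0}\}$ (indices mod $n$), the $b$-symbol weight is $w_b(\mathbf{x})=|\chi_b(\mathbf{x})|$ ($w_1$ is the Hamming weight), and for a linear code $C$, $d_b(C)=\min_{\mathbf{0}\ne \mathbf{c}\in C} w_b(\mathbf{c})$. For $J\subseteq\mathbb{Z}_n$, a hole of $J$ of size $h\ge1$ is a set $H=\{a+1,\dots,a+h\}\subseteq \mathbb{Z}_n\setminus J$ (indices mod $n$) with $a\in J$ and $a+h+1\in J$; $\mathbb{H}(J)$ denotes the set of all holes of $J$. $J$ is a successive subset of $\mathbb{Z}_n$ if $|\mathbb{H}(J)|\le 1$. *)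

From HB Require Import structures.
From mathcomp Require Import all_boot all_order all_algebra all_field.
Set Implicit Arguments. Unset Strict Implicit. Unset Printing Implicit Defensive.
Import GRing.Theory.
Local Open Scope ring_scope.

(* Coordinates of a word of length n are indexed by 'I_n = {0,...,n-1}
   (the paper's Z_n = {1,...,n}, shifted by one); indices are cyclic mod n. *)

Definition cyc (n : nat) (i : 'I_n) (k : nat) : 'I_n :=
  Ordinal (ltn_pmod (i + k)%N (leq_ltn_trans (leq0n i) (ltn_ord i))).

Section BSymbol.
Variables (F : finFieldType) (n : nat).

Definition bsupp (b : nat) (x : 'rV[F]_n) : {set 'I_n} :=
  [set i : 'I_n | [exists j : 'I_b, x 0 (cyc i j) != 0]].

Definition bweight (b : nat) (x : 'rV[F]_n) : nat := #|bsupp b x|.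

(* minimum b-symbol distance of a linear code C: minimum of the b-weights of
   nonzero codewords (every weight is <= n, so the neutral element n of the
   min is harmless whenever C is nonzero). *)
Definition bdist (b : nat) (C : {vspace 'rV[F]_n}) : nat :=
  \big[minn/n]_(c : 'rV[F]_n | (c \in C) && (c != 0)) bweight b c.

End BSymbol.

Section Holes.
Variable n : nat.

(* holes of J : sets H = {a+1, ..., a+h} (h >= 1) contained in the complement
   of J, with a \in J and a+h+1 \in J (indices mod n). h < n necessarily. *)
Definition holes (J : {set 'I_n}) : {set {set 'I_n}} :=
  [set H : {set 'I_n} | [exists a : 'I_n, exists h : 'I_n,
     [&& 0 < h, a \in J, cyc a h.+1 \in J,
         H == [set i : 'I_n | [exists j : 'I_h, i == cyc a j.+1]]
       & H \subset ~: J]]]%N.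

Definition successive (J : {set 'I_n}) : bool := (#|holes J| <= 1)%N.

End Holes.

From mathcomp Require Import all_boot all_order all_algebra all_field.
From mathcomp Require Import zify.
Import GRing.Theory.
Set Implicit Arguments. Unset Strict Implicit. Unset Printing Implicit Defensive.

(* The (b+1)-support of x is its b-support together with the cyclic shift of
   the b-support by one.  This union gains at least one index unless it is
   already everything, whence w_b(x) >= min(w_1(x) + b - 1, n) for every
   nonzero x.  An index gained at step b sits b places before the first index
   of a run of the support chi_1(x), and every run starts right after a hole,
   so a successive support gains at most one index per step: a codeword of
   minimum Hamming weight with successive support attains the lower bound. *)

Section Cyclic.
Variable n : nat.
Implicit Types i j : 'I_n.

Lemma cyc0 i : cyc i 0 = i.
Proof. by apply: val_inj; rewrite /= addn0 modn_small. Qed.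

Lemma cyc_add i a c : cyc (cyc i a) c = cyc i (a + c).
Proof. by apply: val_inj; rewrite /= modnDml addnA. Qed.

Lemma cyc_modn i a c : a = c %[mod n] -> cyc i a = cyc i c.
Proof. by move=> eq_ac; apply: val_inj; rewrite /= -modnDmr eq_ac modnDmr. Qed.

Lemma cyc_n i : cyc i n = i.
Proof. by apply: val_inj; rewrite /= modnDr modn_small. Qed.

Lemma cyc_predK i : cyc (cyc i (n - 1)) 1 = i.
Proof. by rewrite cyc_add subnK ?cyc_n //; have := ltn_ord i; lia. Qed.

Lemma cyc_inj (k : nat) : injective (fun i : 'I_n => cyc i k).
Proof.
move=> i j /(congr1 val) /= /eqP; rewrite eqn_modDr !modn_small //.
by move/eqP/val_inj.
Qed.

Lemma cyc_surj i j : exists k, j = cyc i k.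
Proof.
exists (j + (n - i))%N; apply: val_inj => /=.
have lt_in := ltn_ord i; have lt_jn := ltn_ord j.
by rewrite addnCA subnKC 1?ltnW // modnDr modn_small.
Qed.

Lemma cyc_closed_setT (S : {set 'I_n}) i :
  i \in S -> (forall j, j \in S -> cyc j 1 \in S) -> S = setT.
Proof.
move=> iS closedS; apply/setP => j; rewrite inE; have [k ->] := cyc_surj i j.
by elim: k => [|k IHk]; rewrite ?cyc0 // -addn1 -cyc_add closedS.
Qed.

End Cyclic.

Definition run_starts n (J : {set 'I_n}) : {set 'I_n} :=
  [set e in J | cyc e (n - 1) \notin J].

Section Holes.
Variables (n : nat) (J : {set 'I_n}).

Lemma hole_last_eq H i i' : H \in holes J ->
  i \in H -> cyc i 1 \in J -> i' \in H -> cyc i' 1 \in J -> i = i'.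
Proof.
rewrite inE => /existsP[a /existsP[h /and5P[_ _ _ /eqP def_H HJ]]].
have last_hole j : j \in H -> cyc j 1 \in J -> j = cyc a h.
  rewrite def_H inE => /existsP[m /eqP def_j] jJ.
  case: (ltnP m.+1 h) => [lt_m1h | le_hm1].
    have: cyc j 1 \in ~: J.
      apply: (subsetP HJ); rewrite def_H inE; apply/existsP; exists (Ordinal lt_m1h).
      by rewrite def_j cyc_add addn1.
    by rewrite inE jJ.
  by rewrite def_j (_ : m.+1 = h) //; apply/eqP; rewrite eqn_leq le_hm1 ltn_ord.
by move=> iH iJ i'H i'J; rewrite (last_hole i) // (last_hole i').
Qed.

Lemma exists_hole_before e : e \in run_starts J ->
  exists2 H, H \in holes J & cyc e (n - 1) \in H.
Proof.
rewrite inE => /andP[eJ epJ].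
have n_gt0 : (0 < n)%N by have := ltn_ord e; lia.
(* Walk back from e to the nearest element of J; the gap crossed is the hole. *)
have J_before_e : exists t, (0 < t <= n)%N && (cyc e (n - t) \in J).
  by exists n; rewrite n_gt0 leqnn subnn cyc0.
case: (ex_minnP J_before_e) => t /andP[/andP[t_gt0 le_tn] tJ] t_min.
have t_gt1 : (1 < t)%N.
  by rewrite ltnNge; apply: contra epJ => le_t1; rewrite (_ : 1%N = t) //; lia.
have gapJ s : (0 < s < t)%N -> cyc e (n - s) \notin J.
  move=> /andP[s_gt0 lt_st]; apply/negP => sJ.
  have /t_min : (0 < s <= n)%N && (cyc e (n - s) \in J).
    by rewrite s_gt0 sJ andbT; lia.
  lia.
pose a := cyc e (n - t); have lt_hn : (t - 1 < n)%N by lia.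
have def_aj j : (j < t - 1)%N -> cyc a j.+1 = cyc e (n - (t - j.+1)).
  by move=> lt_jh; rewrite cyc_add; congr cyc; lia.
exists [set i | [exists j : 'I_(t - 1), i == cyc a j.+1]].
  rewrite inE; apply/existsP; exists a; apply/existsP; exists (Ordinal lt_hn).
  apply/and5P; split=> //=; first lia.
    by rewrite cyc_add (_ : (n - t + (t - 1).+1)%N = n) ?cyc_n //; lia.
  apply/subsetP => i; rewrite !inE => /existsP[j /eqP->].
  by rewrite def_aj ?gapJ //; have := ltn_ord j; rewrite /=; lia.
have lt_last : (t - 2 < t - 1)%N by lia.
rewrite inE; apply/existsP; exists (Ordinal lt_last).
by rewrite def_aj /=; [apply/eqP; congr cyc; lia | lia].
Qed.

Lemma card_run_starts_le : (#|run_starts J| <= #|holes J|)%N.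
Proof.
pose hole_of e := odflt set0 [pick H in holes J | cyc e (n - 1) \in H].
have hole_ofP e : e \in run_starts J ->
    hole_of e \in holes J /\ cyc e (n - 1) \in hole_of e.
  move=> eS; rewrite /hole_of; case: pickP => [H /andP[] //|none_H].
  by have [H HJ eH] := exists_hole_before eS; move: (none_H H); rewrite HJ eH.
rewrite -(card_in_imset (f := hole_of)); last first.
  move=> e e' eS e'S same_hole.
  have [HJ eH] := hole_ofP e eS; have [_ e'H] := hole_ofP e' e'S.
  apply: (@cyc_inj n (n - 1)); apply: (hole_last_eq HJ eH _ _ _).
  - by rewrite cyc_predK; move: eS; rewrite inE => /andP[].
  - by rewrite same_hole.
  - by rewrite cyc_predK; move: e'S; rewrite inE => /andP[].
apply/subset_leq_card/subsetP => _ /imsetP[e eS ->].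
by have [] := hole_ofP e eS.
Qed.

End Holes.

Local Open Scope ring_scope.

Section BSymbolSupport.
Variables (F : finFieldType) (n : nat).
Implicit Types (x : 'rV[F]_n) (i : 'I_n).

Lemma bsupp1 x : bsupp 1 x = [set i | x ord0 i != 0].
Proof.
apply/setP => i; rewrite !inE; apply/existsP/idP => [[j]|x_i].
  by rewrite (ord1 j) cyc0.
by exists ord0; rewrite cyc0.
Qed.

Lemma bsupp1_eq0 x : (bsupp 1 x == set0) = (x == 0).
Proof.
rewrite bsupp1; apply/eqP/eqP => [supp0|->].
  apply/rowP => i; rewrite mxE; apply/eqP.
  by have := in_set0 i; rewrite -supp0 inE => /negbFE.
by apply/setP => i; rewrite !inE mxE eqxx.
Qed.

Lemma bsuppS b x : (0 < b)%N ->
  bsupp b.+1 x = bsupp b x :|: (fun i : 'I_n => cyc i 1) @^-1: bsupp b x.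
Proof.
move=> b_gt0; apply/setP => i; rewrite !inE.
apply/existsP/orP => [[j x_ij]|[/existsP[j x_ij]|/existsP[j x_ij]]].
- case: (ltnP j b) => [lt_jb|le_bj]; first by left; apply/existsP; exists (Ordinal lt_jb).
  have lt_b1 : (b.-1 < b)%N by lia.
  right; apply/existsP; exists (Ordinal lt_b1).
  by rewrite cyc_add (_ : (1 + b.-1)%N = j) //; have := ltn_ord j; lia.
- by exists (widen_ord (leqnSn b) j).
- by exists (lift ord0 j); rewrite cyc_add add1n in x_ij.
Qed.

Lemma bsuppS_new b x i : (0 < b)%N ->
  i \in bsupp b.+1 x -> i \notin bsupp b x -> cyc i b \in run_starts (bsupp 1 x).
Proof.
move=> b_gt0; rewrite inE => /existsP[j x_ij]; rewrite inE negb_exists.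
move=> /forallP x_i0; rewrite bsupp1 !inE.
case: (ltnP j b) => [lt_jb|le_bj]; first by move: (x_i0 (Ordinal lt_jb)); rewrite x_ij.
have def_j : nat_of_ord j = b by have := ltn_ord j; lia.
have lt_b1 : (b.-1 < b)%N by lia.
rewrite -def_j x_ij cyc_add def_j (@cyc_modn _ _ _ b.-1).
  by rewrite (negbNE (x_i0 (Ordinal lt_b1))).
by rewrite (_ : (b + (n - 1))%N = (b.-1 + n)%N) ?modnDr //; have := ltn_ord i; lia.
Qed.

Lemma card_bsuppS_le b x : (0 < b)%N ->
  (#|bsupp b.+1 x| <= #|bsupp b x| + #|run_starts (bsupp 1 x)|)%N.
Proof.
move=> b_gt0.
have sub : bsupp b.+1 x \subset
    bsupp b x :|: (fun i : 'I_n => cyc i b) @^-1: run_starts (bsupp 1 x).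
  apply/subsetP => i i_b1; rewrite in_setU.
  by have [//|i_b] := boolP (i \in bsupp b x); rewrite /= inE bsuppS_new.
apply: leq_trans (subset_leq_card sub) _.
by rewrite cardsU card_preimset ?leq_subr //; apply: cyc_inj.
Qed.

Lemma card_bsuppS_ge b x : x != 0 -> (0 < b)%N ->
  (minn #|bsupp b x|.+1 n <= #|bsupp b.+1 x|)%N.
Proof.
move=> x_neq0 b_gt0; rewrite bsuppS //; set S := bsupp b x.
have [shiftS | /subsetPn[i iP iS]] :=
  boolP ((fun i : 'I_n => cyc i 1) @^-1: S \subset S).
  have eq_shiftS : (fun i : 'I_n => cyc i 1) @^-1: S = S.
    by apply/eqP; rewrite eqEcard shiftS card_preimset ?leqnn //; apply: cyc_inj.
  have [i x_i] : exists i, i \in bsupp 1 x.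
    by apply/set0Pn; rewrite bsupp1_eq0.
  have iS : i \in S.
    move: x_i; rewrite !inE => /existsP[j x_ij].
    by apply/existsP; exists (Ordinal b_gt0); rewrite (ord1 j) in x_ij.
  have ->: S = setT by apply: (cyc_closed_setT iS) => j; rewrite -{1}eq_shiftS inE.
  by rewrite setTU cardsT card_ord geq_minr.
apply: leq_trans (geq_minl _ _) (proper_card _).
by rewrite properUl //; apply/subsetPn; exists i.
Qed.

End BSymbolSupport.

Section BSymbolWeight.
Variables (F : finFieldType) (n : nat).
Implicit Types (x : 'rV[F]_n) (C : {vspace 'rV[F]_n}).

Lemma bweight1_gt0 x : (0 < bweight 1 x)%N = (x != 0).
Proof. by rewrite /bweight card_gt0 bsupp1_eq0. Qed.

Lemma bweight_le_n b x : (bweight b x <= n)%N.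
Proof. by rewrite /bweight -[n in (_ <= n)%N]card_ord max_card. Qed.

Lemma bweight_ge x b : x != 0 -> (0 < b)%N ->
  (minn (bweight 1 x + b - 1) n <= bweight b x)%N.
Proof.
move=> x_neq0; elim: b => // b IHb _.
have [->|b_gt0] := posnP b; first by rewrite addn1 subn1 geq_minl.
by have := IHb b_gt0; have := card_bsuppS_ge x_neq0 b_gt0; rewrite /bweight; lia.
Qed.

Lemma bweight_le x b : successive (bsupp 1 x) -> (0 < b)%N ->
  (bweight b x <= bweight 1 x + b - 1)%N.
Proof.
rewrite /successive => one_hole; elim: b => // b IHb _.
have [->|b_gt0] := posnP b; first by rewrite addn1 subn1.
have := card_run_starts_le (bsupp 1 x); have := card_bsuppS_le x b_gt0.
by have := IHb b_gt0; rewrite /bweight; lia.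
Qed.

Lemma bdist_le b C c : c \in C -> c != 0 -> (bdist b C <= bweight b c)%N.
Proof.
move=> cC c_neq0; rewrite /bdist unlock.
have : c \in index_enum 'rV[F]_n by rewrite mem_index_enum.
elim: (index_enum _) => // y s IHs; rewrite inE /= => /orP[/eqP <-|cs].
  by rewrite cC c_neq0 geq_minl.
by case: ifP => _; [apply: leq_trans (geq_minr _ _) (IHs cs) | apply: IHs].
Qed.

Lemma bdist_ge b C m : (m <= n)%N ->
  (forall x, x \in C -> x != 0 -> (m <= bweight b x)%N) -> (m <= bdist b C)%N.
Proof.
move=> le_mn m_le; apply: (big_ind (fun v => m <= v)%N) => // [u v mu mv|x /andP[]].
  by rewrite leq_min mu mv.
exact: m_le.
Qed.

End BSymbolWeight.

Theorem mainTheorem1 (F : finFieldType) (n k : nat) (C : {vspace 'rV[F]_n}) :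
  \dim C = k -> C != 0%VS ->
  (exists2 c : 'rV[F]_n, c \in C &
     bweight 1 c = bdist 1 C /\ successive (bsupp 1 c)) ->
  forall b : nat, (1 <= b <= n)%N ->
    bdist b C = minn (bdist 1 C + b - 1) n.
Proof.
move=> _ _ [c cC [wc succ_c]] b /andP[b_gt0 le_bn].
have d1_gt0 : (0 < bdist 1 C)%N.
  by apply: bdist_ge => [|x _]; [exact: leq_trans le_bn | rewrite bweight1_gt0].
have c_neq0 : c != 0 by rewrite -bweight1_gt0 wc.
apply/eqP; rewrite eqn_leq; apply/andP; split.
  apply: leq_trans (bdist_le b cC c_neq0) _.
  by rewrite leq_min bweight_le_n -wc bweight_le.
apply: bdist_ge => [|x xC x_neq0]; first exact: geq_minr.
apply: leq_trans (bweight_ge x_neq0 b_gt0).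
by rewrite leq_min geq_minr andbT geq_min leq_sub2r ?leq_add2r ?bdist_le.
Qed.
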